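(* (i) For every integer $q\in\{1,\dots,6\}$, the optimal value $A_q$ of the linear program in real variables $\omega_1,\dots,\omega_6,\chi$ — maximize $\frac{q}{q+1}\cdot\frac78\chi-\sum_{j=1}^q\frac{\omega_j}{j(j+1)}$ subject to $\omega_i\le\omega_{i+1}$ ($i=1,\dots,5$), $\chi-\omega_1\le1$, $2\chi-\omega_2-\omega_3\le1$, $3\chi-3\omega_5\le1$, $\chi\ge2$, $\omega_q\le\frac78\chi$ — satisfies $A_q\le\frac12$. (ii) For every pair of integers $(p,q)$ with $1\le p\le5$ and $p\le q\le10$, the optimal value $B_{p,q}$ of the linear program in real variables $\omega_1,\dots,\omega_{10},\chi$ — maximize $\frac1p+\left(\frac{q}{q+1}\cdot\frac78-\frac12\right)\chi-\sum_{j=p}^q\frac{\omega_j}{j(j+1)}$ subject to $\omega_i\le\omega_{i+1}$ ($i=1,\dots,9$), $\chi-\omega_1\le1$, $2\chi-\omega_2-\omega_3\le1$, $3\chi-\omega_3-\omega_4-\omega_5\le1$, $4\chi-4\omega_7\le1$, $\omega_{p-1}\le1$ (omitted when $p=1$), $\omega_p\ge1$, $\omega_q\le\frac78\chi$ — satisfies $B_{p,q}\le\frac12$. (iii) Consequently, for every edge-colored graph $H$, every feasible solution $x$ of the \textsc{MinECC} LP relaxation, and every edge $e$ with $x_e=\max_{w\in e}x_w^{\ell(e)}\in(\frac18,\frac34)$, the output $Y$ of GenColorRound applied to $x$ with $I=(\frac12,\frac78)$ satisfies $\Pr[e\in\mathcal M_Y]\le\frac43x_e$.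
   Context: An edge-colored graph is $H=(V,E,C,\ell)$ with colors $C=[k]$, $\ell\colon E\to C$, every edge a set of exactly two nodes. A node coloring $Y\colon V\to C$ makes a mistake at $e$ ($e\in\mathcal M_Y$) if some $w\in e$ has $Y[w]\ne\ell(e)$. The \textsc{MinECC} LP relaxation constraints: $\sum_{i=1}^k x_w^i=k-1$ for all $w\in V$; $x_e\ge x_w^{\ell(e)}$ for $w\in e$; $0\le x_w^i\le1$; $0\le x_e\le 1$. GenColorRound with interval $I$, applied to $x$: draw $\rho$ uniformly from $I$ and, independently, a uniformly random permutation $\pi$ of $[k]$; let $S_i=\{w: x_w^i<\rho\}$; for $w\in\bigcup_iS_i$ set $Y[w]=\pi(j)$ with $j$ the largest index such that $w\in S_{\pi(j)}$; other nodes get an arbitrary color. *)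

From HB Require Import structures.
From mathcomp Require Import all_boot all_order all_algebra all_fingroup.
From mathcomp Require Import all_classical all_reals all_analysis.
Set Implicit Arguments. Unset Strict Implicit. Unset Printing Implicit Defensive.
Import Order.TTheory GRing.Theory Num.Theory.
Local Open Scope ring_scope.
Local Open Scope classical_set_scope.

Section LPs.
Variable R : realType.

Definition A_feasible (q : nat) (w : nat -> R) (chi : R) : Prop :=
  (forall i : nat, (1 <= i <= 5)%N -> w i <= w i.+1) /\
  chi - w 1%N <= 1 /\
  2 * chi - w 2%N - w 3%N <= 1 /\
  3 * chi - 3 * w 5%N <= 1 /\
  2 <= chi /\
  w q <= 7 / 8 * chi.

Definition A_obj (q : nat) (w : nat -> R) (chi : R) : R :=
  q%:R / (q.+1)%:R * (7 / 8) * chi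
  - \sum_(1 <= j < q.+1) w j / (j * j.+1)%:R.

Definition A_val (q : nat) : \bar R :=
  ereal_sup [set y : \bar R | exists (w : nat -> R) (chi : R),
                       A_feasible q w chi /\ y = (A_obj q w chi)%:E].

Definition B_feasible (p q : nat) (w : nat -> R) (chi : R) : Prop :=
  (forall i : nat, (1 <= i <= 9)%N -> w i <= w i.+1) /\
  chi - w 1%N <= 1 /\
  2 * chi - w 2%N - w 3%N <= 1 /\
  3 * chi - w 3%N - w 4%N - w 5%N <= 1 /\
  4 * chi - 4 * w 7%N <= 1 /\
  ((1 < p)%N -> w p.-1 <= 1) /\
  1 <= w p /\
  w q <= 7 / 8 * chi.

Definition B_obj (p q : nat) (w : nat -> R) (chi : R) : R :=
  1 / p%:R + (q%:R / (q.+1)%:R * (7 / 8) - 1 / 2) * chi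
  - \sum_(p <= j < q.+1) w j / (j * j.+1)%:R.

Definition B_val (p q : nat) : \bar R :=
  ereal_sup [set y : \bar R | exists (w : nat -> R) (chi : R),
                       B_feasible p q w chi /\ y = (B_obj p q w chi)%:E].
End LPs.

Section ECC.
Variable R : realType.
Variables (V E : finType) (k : nat).
Variable ends : E -> {set V}.
Variable lab : E -> 'I_k.

Definition edge_colored_graph : Prop := forall e : E, #|ends e| = 2%N.

(* feasibility for the MinECC LP relaxation; x w i = x_w^i, xe e = x_e *)
Definition minecc_feasible (x : V -> 'I_k -> R) (xe : E -> R) : Prop :=
  (forall w : V, \sum_(i < k) x w i = k%:R - 1) /\
  (forall (e : E) (w : V), w \in ends e -> x w (lab e) <= xe e) /\
  (forall (w : V) (i : 'I_k), 0 <= x w i <= 1) /\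
  (forall e : E, 0 <= xe e <= 1).

(* color produced by GenColorRound for threshold rho and permutation pi:
   S_i = {w | x_w^i < rho}; if w lies in some S_i, Y[w] = pi(j) for the largest
   index j with w in S_(pi j); otherwise Y[w] = d w (an arbitrary color). *)
Definition gcr_color (x : V -> 'I_k -> R) (d : V -> 'I_k)
    (rho : R) (pi : {perm 'I_k}) (w : V) : 'I_k :=
  match [pick j : 'I_k | (x w (pi j) < rho) &&
            [forall j' : 'I_k, (j < j')%N ==> ~~ (x w (pi j') < rho)]] with
  | Some j => pi j
  | None => d w
  end.

Definition gcr_mistake (x : V -> 'I_k -> R) (d : V -> 'I_k)
    (rho : R) (pi : {perm 'I_k}) (e : E) : Prop :=
  exists2 w, w \in ends e & gcr_color x d rho pi w != lab e.

(* Pr[e in M_Y] when rho is uniform on the open interval (a, b) and pi is an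
   independent uniformly random permutation of [k]. *)
Definition gcr_prob_mistake (a b : R) (x : V -> 'I_k -> R) (d : V -> 'I_k)
    (e : E) : \bar R :=
  ((\sum_(pi : {perm 'I_k})
      (@lebesgue_measure R) [set rho : R | (a < rho < b)%R /\ gcr_mistake x d rho pi e])
   * ((#|{perm 'I_k}|%:R * (b - a))^-1)%:E)%E.
End ECC.

From HB Require Import structures.
From mathcomp Require Import all_boot all_order all_algebra all_fingroup.
From mathcomp Require Import all_classical all_reals all_analysis.
From mathcomp Require Import ring lra zify.
Set Implicit Arguments. Unset Strict Implicit. Unset Printing Implicit Defensive.
Import Order.TTheory GRing.Theory Num.Theory.
Local Open Scope ring_scope.

(* (i), (ii): each objective is bounded by a nonnegative combination of the
   constraints; after unfolding the finite sums, [lra] finds it for every (p, q).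

   (iii) follows from (i) and (ii). Fix the edge e = {u, v}, its color c and
   t = x_e. Sort the other colors ("rivals") by their entry value
   min(x_u^i, x_v^i), let r_n be the n-th entry value (1 past the end), and for
   a permutation pi let J(pi) be the index of the first rival, in entry order,
   that pi places after c. Then
   - for rho > t a mistake forces r_J < rho, so the mistakes of pi inside
     (1/2, 7/8) have measure <= (T - 1/2) + excess (max T r_J), T = max(1/2, t);
   - J is distributed as P[J = n] = 1/((n+1)(n+2)), by symmetry of pi;
   - the constraints sum_i x_w^i = k - 1 make r "admissible" (two-coloring the
     rivals by the endpoint attaining their entry value);
   - for admissible r, sum_n excess(r_n)/((n+1)(n+2)) is t times an objective
     of LP (i) (t <= 1/2) or of LP (ii) with p = 1 (t > 1/2) at the point
     w_j = r_(j-1)/t, chi = 1/t; hence it is at most t/2 - (T - 1/2).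
   Averaging over pi and rho gives Pr[e in M_Y] <= (t/2) / (3/8) = 4t/3. *)

Section LinearPrograms.
Variable R : realType.

Lemma A_obj_le q (w : nat -> R) chi :
  (1 <= q <= 6)%N -> A_feasible q w chi -> A_obj q w chi <= 1/2.
Proof.
case: q => [|[|[|[|[|[|[|q]]]]]]] // _ [mono [h1 [h2 [h3 [h4 h5]]]]];
have m1 := mono 1%N erefl; have m2 := mono 2%N erefl; have m3 := mono 3%N erefl;
have m4 := mono 4%N erefl; have m5 := mono 5%N erefl;
rewrite /A_obj /index_iota /= !big_cons big_nil /=; lra.
Qed.

Lemma B_obj_le p q (w : nat -> R) chi : (1 <= p <= 5)%N -> (p <= q <= 10)%N ->
  B_feasible p q w chi -> B_obj p q w chi <= 1/2.
Proof.
move=> hp hq [mono [h1 [h2 [h3 [h4 [h5 [h6 h7]]]]]]].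
have m1 := mono 1%N erefl; have m2 := mono 2%N erefl; have m3 := mono 3%N erefl.
have m4 := mono 4%N erefl; have m5 := mono 5%N erefl; have m6 := mono 6%N erefl.
have m7 := mono 7%N erefl; have m8 := mono 8%N erefl; have m9 := mono 9%N erefl.
move: hp hq h5 h6 h7; rewrite /B_obj.
case: p => [|[|[|[|[|[|p]]]]]] // _;
case: q => [|[|[|[|[|[|[|[|[|[|[|[|q]]]]]]]]]]]] // _ /= h5 h6 h7;
rewrite /index_iota /= ?big_cons ?big_nil /=; try have := h5 erefl; lra.
Qed.

End LinearPrograms.

Section ThresholdProfiles.
Variable R : realType.
Implicit Types (t a T : R) (r : nat -> R).

(* length of the interval (z, 7/8); zero when z >= 7/8 *)
Definition excess (z : R) : R := Num.max 0 (7/8 - z).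

(* telescoping: sum_(n<q) 1/((n+1)(n+2)) = q/(q+1) *)
Lemma sum_inv_consecutive q :
  \sum_(0 <= n < q) 1 / (n.+1 * n.+2)%:R = q%:R / q.+1%:R :> R.
Proof.
elim: q => [|q IH]; first by rewrite big_nil mul0r.
rewrite big_nat_recr //= IH natrM -!natr1.
by field; rewrite !natr1 !pnatr_eq0.
Qed.

(* the LP point w_j = r_(j-1)/t, with chi = 1/t, associated with a profile r *)
Definition scaled t r (j : nat) : R := r j.-1 / t.

Lemma scaled_sum t r q : t != 0 ->
  t * \sum_(1 <= j < q.+1) scaled t r j / (j * j.+1)%:R
  = \sum_(0 <= n < q) r n / (n.+1 * n.+2)%:R.
Proof.
move=> t0; rewrite big_add1 /= mulr_sumr; apply: eq_bigr => n _.
by rewrite /scaled /= mulrA mulrCA divff // mulr1.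
Qed.

Lemma sum_excess_split r q :
  \sum_(0 <= n < q) (7/8 - r n) / (n.+1 * n.+2)%:R
  = q%:R / q.+1%:R * (7/8) - \sum_(0 <= n < q) r n / (n.+1 * n.+2)%:R.
Proof.
rewrite -(sum_inv_consecutive q) big_distrl -sumrB; apply: eq_bigr => n _.
by rewrite mulrBl mul1r mulrC.
Qed.

Lemma A_obj_scaled t r q : t != 0 ->
  t * A_obj q (scaled t r) t^-1 = \sum_(0 <= n < q) (7/8 - r n) / (n.+1 * n.+2)%:R.
Proof.
move=> t0; rewrite /A_obj mulrBr scaled_sum // sum_excess_split.
by rewrite mulrCA divff // mulr1.
Qed.

Lemma B_obj_scaled t r q : t != 0 ->
  t * B_obj 1 q (scaled t r) t^-1
  = t - 1/2 + \sum_(0 <= n < q) (7/8 - r n) / (n.+1 * n.+2)%:R.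
Proof.
move=> t0; rewrite /B_obj mulrBr scaled_sum // sum_excess_split.
by rewrite mulrDr divr1 mulr1 mulrCA divff // mulr1; ring.
Qed.

(* the inequalities satisfied by the sorted rival entries of an edge with x_e = t *)
Record admissible t r : Prop := Admissible {
  adm_mono : forall n, r n <= r n.+1;
  adm_first : 1 - r 0%N <= t;
  adm_pair : (1 - r 1%N) + (1 - r 2%N) <= t;
  adm_triple : (1 - r 2%N) + (1 - r 3%N) + (1 - r 4%N) <= t;
  adm_seventh : 4 * (1 - r 6%N) <= t;
  adm_eleventh : 6 * (1 - r 10%N) <= t }.

Lemma admissible_max T t r : admissible t r -> admissible t (fun n => Num.max T (r n)).
Proof.
case=> mono h1 h2 h3 h4 h5.
have up n : 1 - Num.max T (r n) <= 1 - r n by rewrite lerD2l lerN2 le_max lexx orbT.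
split.
- by move=> n; rewrite ge_max !le_max lexx (mono n) !orbT.
- exact: le_trans (up _) h1.
- exact: le_trans (lerD (up _) (up _)) h2.
- exact: le_trans (lerD (lerD (up _) (up _)) (up _)) h3.
- by apply: le_trans h4; rewrite ler_pM2l ?up.
- by apply: le_trans h5; rewrite ler_pM2l ?up.
Qed.

Lemma threshold_prefix r a N : (forall n, r n <= r n.+1) ->
  exists2 q, (q <= N)%N & forall n, (n < N)%N -> (r n < a) = (n < q)%N.
Proof.
move=> mono; pose q := find (fun n => a <= r n) (iota 0 N).
exists q; first by rewrite -[X in (_ <= X)%N](size_iota 0 N) find_size.
move=> n nN; apply/idP/idP => [rn|nq]; last first.
  by have := before_find 0%N nq; rewrite nth_iota //= add0n => /negbT; rewrite -ltNge.
rewrite ltnNge; apply/negP => qn; have qN : (q < N)%N := leq_ltn_trans qn nN.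
have found : has (fun n => a <= r n) (iota 0 N) by rewrite has_find size_iota.
have a_rq : a <= r q by have := nth_find 0%N found; rewrite nth_iota.
have r_qn : r q <= r n := homo_leq lexx (fun y x z => @le_trans _ _ y x z) mono qn.
by move: rn; rewrite ltNge (le_trans a_rq r_qn).
Qed.

Lemma excess_sum_prefix r N q : (q <= N)%N ->
  (forall n, (n < N)%N -> (r n < 7/8) = (n < q)%N) ->
  \sum_(0 <= n < N) excess (r n) / (n.+1 * n.+2)%:R
  = \sum_(0 <= n < q) (7/8 - r n) / (n.+1 * n.+2)%:R.
Proof.
move=> qN below; rewrite (big_cat_nat (leq0n q) qN) /= [X in _ + X]big1_seq ?addr0.
  apply: eq_big_nat => n /andP[_ nq]; rewrite /excess max_r // subr_ge0 ltW //.
  by rewrite below ?(leq_trans nq qN).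
move=> n /andP[_]; rewrite mem_index_iota => /andP[qn nN].
by rewrite /excess max_l ?mul0r // subr_le0 leNgt below // -leqNgt qn.
Qed.

Lemma A_feasible_scaled t r q : 0 < t <= 1/2 -> admissible t r ->
  (1 <= q)%N -> r q.-1 <= 7/8 -> A_feasible q (scaled t r) t^-1.
Proof.
move=> /andP[t0 th] [mono h1 h2 h3 _ _] q1 hq.
have m2 := mono 2%N; have m3 := mono 3%N.
have s0 : 0 < t^-1 by rewrite invr_gt0.
have ts : t * t^-1 = 1 by rewrite divff // gt_eqF.
rewrite /A_feasible /scaled /=; split; last split; last split; last split; last split.
- by move=> [|i] // _; apply: ler_wpM2r; [exact: ltW | exact: mono].
- nra.
- nra.
- nra.
- nra.
- nra.
Qed.

Lemma B_feasible_scaled t r q : 0 < t -> admissible t r -> t <= r 0%N ->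
  (1 <= q)%N -> r q.-1 <= 7/8 -> B_feasible 1 q (scaled t r) t^-1.
Proof.
move=> t0 [mono h1 h2 h3 h4 _] hr0 q1 hq.
have s0 : 0 < t^-1 by rewrite invr_gt0.
have ts : t * t^-1 = 1 by rewrite divff // gt_eqF.
rewrite /B_feasible /scaled /=.
split; last split; last split; last split; last split; last split; last split.
- by move=> [|i] // _; apply: ler_wpM2r; [exact: ltW | exact: mono].
- nra.
- nra.
- nra.
- nra.
- by [].
- nra.
- nra.
Qed.

(* the analytic core of (iii), derived from (i) for t <= 1/2 and from (ii)
   with p = 1 for t > 1/2 *)
Lemma gain_bound t r N : 0 < t < 3/4 -> admissible t r ->
  t <= r 0%N ->
  \sum_(0 <= n < N) excess (r n) / (n.+1 * n.+2)%:R <= t/2 - (Num.max (1/2) t - 1/2).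
Proof.
move=> /andP[t0 t34] adm hr0; have tn0 : t != 0 by rewrite gt_eqF.
have [q qN below] := threshold_prefix (7/8) N (adm_mono adm).
rewrite (excess_sum_prefix qN below).
case: q qN below => [|q] qN below.
  by rewrite big_geq //; have [small|large] := lerP t (1/2); lra.
have rq : r q <= 7/8 by rewrite ltW // below.
have [small|large] := lerP t (1/2).
- have q6 : (q.+1 <= 6)%N.
    rewrite leqNgt; apply/negP => q7; have := below 6%N (leq_trans q7 qN).
    by rewrite q7; have := adm_seventh adm; lra.
  have tA : 0 < t <= 1/2 by rewrite t0.
  have := A_obj_le (q := q.+1) q6 (A_feasible_scaled (q := q.+1) tA adm isT rq).
  by rewrite -(ler_pM2l t0) A_obj_scaled //; lra.
- have q10 : (q.+1 <= 10)%N.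
    rewrite leqNgt; apply/negP => q11; have := below 10%N (leq_trans q11 qN).
    by rewrite q11; have := adm_eleventh adm; lra.
  have := B_obj_le (p := 1) (q := q.+1) isT q10 (B_feasible_scaled (q := q.+1) t0 adm hr0 isT rq).
  by rewrite -(ler_pM2l t0) B_obj_scaled //; lra.
Qed.

End ThresholdProfiles.

Section LastInOrder.
Variable k : nat.
Local Open Scope nat_scope.
Implicit Types (p : {perm 'I_k}) (s : seq 'I_k) (a b : 'I_k).

(* position of color a in the order pi(0), pi(1), ... drawn by GenColorRound *)
Definition pos p a : nat := (p^-1)%g a.

Lemma pos_inj p : injective (pos p).
Proof. by move=> a b /val_inj/perm_inj. Qed.

Lemma pos_swap p a b y : pos (p * tperm a b)%g y = pos p (tperm a b y).
Proof. by rewrite /pos invMg permM tpermV. Qed.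

Definition last_of s a : {set {perm 'I_k}} :=
  [set p | all (fun y => pos p y <= pos p a) s].

(* composing with the transposition (a b) exchanges last_of s a and last_of s b *)
Lemma card_last_of_swap s a b : a \in s -> b \in s -> #|last_of s a| = #|last_of s b|.
Proof.
move=> sa sb.
suff -> : last_of s a = (fun p => p * tperm a b)%g @^-1: last_of s b.
  by rewrite card_preimset //; apply: mulIg.
apply/setP => p; rewrite !inE pos_swap tpermR.
have mem_swap z : (z \in map (tperm a b) s) = (z \in s).
  rewrite -{1}(tpermK a b z) mem_map; last exact: perm_inj.
  by case: tpermP => [->|->|//]; rewrite ?sa ?sb.
rewrite -(eq_all_r mem_swap) all_map; apply: eq_all => y /=.
by rewrite pos_swap.
Qed.

Lemma last_of_unique s p : uniq s -> s != [::] -> \sum_(a <- s) (p \in last_of s a) = 1.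
Proof.
case: s => [//|a0 s0] us _; set s := a0 :: s0.
have [a1 sa1 a1_max] := @arg_maxnP _ a0 (fun i => i \in s) (pos p) (mem_head _ _).
rewrite big_seq_cond (eq_bigr (fun a => (a == a1) : nat)); last first.
  move=> a /andP[sa _]; rewrite inE; congr nat_of_bool; apply/allP/eqP => [a_last|->].
    apply: (@pos_inj p); apply/eqP; rewrite eqn_leq.
    by apply/andP; split; [exact: a1_max | exact: a_last].
  by move=> y sy; apply: a1_max.
by rewrite -big_seq_cond -big_mkcond sum1_count (count_uniq_mem _ us) sa1.
Qed.

Lemma card_last_of s a : uniq s -> a \in s -> #|last_of s a| * size s = k`!.
Proof.
move=> us sa.
have total : \sum_(b <- s) #|last_of s b| = k`!.
  rewrite -card_Sn -sum1_card.
  transitivity (\sum_(p : {perm 'I_k}) \sum_(b <- s) (p \in last_of s b) : nat).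
    rewrite exchange_big /=; apply: eq_bigr => b _.
    by rewrite -sum1_card big_mkcond; apply: eq_bigr => p _; case: (p \in _).
  apply: eq_big => // p _; rewrite last_of_unique //.
  by apply/eqP => s0; rewrite s0 in sa.
rewrite -total (eq_big_seq (fun _ => #|last_of s a|)); last first.
  by move=> b sb; apply: card_last_of_swap.
by rewrite big_const_seq count_predT iter_addn_0 mulnC.
Qed.

End LastInOrder.

Section NatSums.
Variable R : realType.

Lemma sum_truncate (f : nat -> R) N S :
  (forall n, 0 <= f n) -> (forall n, (S <= n)%N -> f n = 0) ->
  \sum_(0 <= n < N) f n <= \sum_(0 <= n < S) f n.
Proof.
move=> f_ge0 f_eq0; have [NS|SN] := leqP N S.
  by rewrite [X in _ <= X](big_cat_nat (leq0n N) NS) /= lerDl sumr_ge0.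
rewrite (big_cat_nat (leq0n S) (ltnW SN)) /= [X in _ + X]big1_seq ?addr0 //.
by move=> n /andP[_]; rewrite mem_index_iota => /andP[Sn _]; apply: f_eq0.
Qed.

Lemma sum_indicator (F : nat -> R) m S : (m < S)%N ->
  \sum_(0 <= n < S) (m == n)%:R * F n = F m.
Proof.
move=> mS; rewrite (bigD1_seq m) ?mem_index_iota ?iota_uniq //= eqxx mul1r.
by rewrite big1 ?addr0 // => n; rewrite eq_sym => /negbTE ->; rewrite mul0r.
Qed.

End NatSums.

Section TwoColorings.
Variable R : realType.
Implicit Types (t : R) (y : nat -> R) (side : nat -> bool).

Definition color_budget t y side (N : nat) : Prop :=
  forall b, \sum_(0 <= j < N) (if side j == b then y j else 0) <= t.

(* for nonincreasing y >= 0, a color class among the first 3 (resp. 5) indices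
   contains 2 (resp. 3) of them *)
Lemma two_color_pair t y side : (forall j, y j.+1 <= y j) -> (forall j, 0 <= y j) ->
  color_budget t y side 3 -> y 1%N + y 2%N <= t.
Proof.
move=> mono y_ge0 budget; have := budget true; have := budget false.
rewrite /index_iota /= !big_cons !big_nil.
have := mono 0%N; have := mono 1%N; have := y_ge0 2%N.
by case: (side 0%N); case: (side 1%N); case: (side 2%N) => /=; lra.
Qed.

Lemma two_color_triple t y side : (forall j, y j.+1 <= y j) -> (forall j, 0 <= y j) ->
  color_budget t y side 5 -> y 2%N + y 3%N + y 4%N <= t.
Proof.
move=> mono y_ge0 budget; have := budget true; have := budget false.
rewrite /index_iota /= !big_cons !big_nil.
have := mono 0%N; have := mono 1%N; have := mono 2%N; have := mono 3%N; have := y_ge0 4%N.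
by case: (side 0%N); case: (side 1%N); case: (side 2%N); case: (side 3%N);
  case: (side 4%N) => /=; lra.
Qed.

(* some color class contains m of the first n+1 indices when 2m <= n+2 *)
Lemma two_color_majority t y side n m :
  (forall j, y j.+1 <= y j) -> (forall j, 0 <= y j) ->
  color_budget t y side n.+1 -> (m.*2 <= n.+2)%N -> m%:R * y n <= t.
Proof.
move=> mono y_ge0 budget hm.
pose cnt b := (\sum_(0 <= j < n.+1) (side j == b))%N.
have cnt_total : (cnt true + cnt false = n.+1)%N.
  rewrite /cnt -big_split /= (eq_bigr (fun _ => 1%N)); last by move=> j _; case: (side j).
  by rewrite sum_nat_const_nat subn0 muln1.
have y_le j : (j <= n)%N -> y n <= y j.
  move=> /subnKC <-; elim: (n - j)%N => [|i IH]; first by rewrite addn0.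
  by rewrite addnS; apply: le_trans (mono _) IH.
have cnt_bound b : (cnt b)%:R * y n <= t.
  apply: le_trans (budget b).
  rewrite /cnt natr_sum big_distrl /= !big_nat; apply: ler_sum => j /andP[_ jn].
  by case: (side j == b); rewrite ?mul0r // mul1r y_le.
have [b mb] : exists b, (m <= cnt b)%N.
  have [mt|tm] := leqP m (cnt true); first by exists true.
  by exists false; move: tm hm cnt_total; rewrite -addnn; lia.
by apply: le_trans (cnt_bound b); rewrite ler_wpM2r // ler_nat.
Qed.

End TwoColorings.

Section IntervalMeasure.
Variable R : realType.
Local Open Scope classical_set_scope.
Local Notation lambda := (@lebesgue_measure R).

Lemma lebesgue_le (A B : set R) : A `<=` B -> (lambda A <= lambda B)%E.
Proof. by move=> AB; apply: le_mu_ext. Qed.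

Lemma lebesgue_two_intervals (a T M b : R) (A : set R) : a <= T ->
  A `<=` `]a, T] `|` `]M, b[ -> (lambda A <= ((T - a) + Num.max 0 (b - M))%:E)%E.
Proof.
move=> aT AB.
have union_le : (lambda (`]a, T] `|` `]M, b[) <= lambda `]a, T] + lambda `]M, b[)%E :=
  @measureU2 _ _ _ lambda _ _ (measurable_itv _) (measurable_itv _).
apply: le_trans (lebesgue_le AB) _; apply: le_trans union_le _.
have lenL := lebesgue_measure_itv `]a, T]%R; have lenR := lebesgue_measure_itv `]M, b[%R.
rewrite /= in lenL lenR; rewrite lenL lenR !lte_fin EFinD; apply: leeD.
  by case: ifP => _; rewrite lee_fin ?subr_ge0.
by case: ifP => _; rewrite lee_fin ?le_max ?lexx ?orbT.
Qed.

End IntervalMeasure.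

Lemma gcr_color_eq (R : realType) (V : finType) (k : nat) (x : V -> 'I_k -> R)
    (d : V -> 'I_k) (rho : R) (p : {perm 'I_k}) (w : V) (c : 'I_k) :
  x w c < rho -> (forall j : 'I_k, ((p^-1)%g c < j)%N -> ~~ (x w (p j) < rho)) ->
  gcr_color x d rho p w = c.
Proof.
move=> wc late; rewrite /gcr_color; case: pickP => [j /andP[xj /forallP after] | none].
  have [cj|jc|/val_inj <-] := ltngtP ((p^-1)%g c) j; last by rewrite permKV.
  - by move: (late j cj); rewrite xj.
  - by have := after ((p^-1)%g c); rewrite jc /= permKV wc.
have := none ((p^-1)%g c); rewrite /= permKV wc /=.
by case/negP; apply/forallP => j; apply/implyP; apply: late.
Qed.

Section EdgeRounding.
Variable R : realType.
Variables (V E : finType) (k : nat) (ends : E -> {set V}) (lab : E -> 'I_k).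
Variables (x : V -> 'I_k -> R) (xe : E -> R) (e : E) (d : V -> 'I_k) (u v : V).
Hypothesis ends_e : ends e = [set u; v].
Hypothesis feas : minecc_feasible ends lab x xe.
Hypothesis xe_ge : forall w, w \in ends e -> x w (lab e) <= xe e.

Local Notation c := (lab e).
Local Notation t := (xe e).

(* color i enters S_i at an endpoint of e as soon as rho > entry i *)
Definition entry (i : 'I_k) : R := Num.min (x u i) (x v i).

Definition rivals : seq 'I_k :=
  sort (fun i j => entry i <= entry j) [seq i <- enum 'I_k | i != c].

Definition rival_entry (n : nat) : R :=
  if (n < size rivals)%N then entry (nth c rivals n) else 1.

Definition first_late (p : {perm 'I_k}) : nat :=
  find (fun i => pos p c < pos p i)%N rivals.

Lemma x_range w i : 0 <= x w i <= 1.
Proof. by case: feas => _ [_ [range _]]. Qed.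

Lemma entry_le w i : w \in ends e -> entry i <= x w i.
Proof. by rewrite ends_e !inE /entry => /orP[] /eqP ->; rewrite ge_min lexx ?orbT. Qed.

Lemma entry_le1 i : entry i <= 1.
Proof.
have ue : u \in ends e by rewrite ends_e !inE eqxx.
by apply: le_trans (entry_le i ue) _; case/andP: (x_range u i).
Qed.

Lemma mem_rivals i : (i \in rivals) = (i != c).
Proof. by rewrite mem_sort mem_filter mem_enum andbT. Qed.

Lemma uniq_rivals : uniq rivals.
Proof. by rewrite sort_uniq filter_uniq // enum_uniq. Qed.

Lemma rival_entry_le1 n : rival_entry n <= 1.
Proof. by rewrite /rival_entry; case: ifP => _ //; apply: entry_le1. Qed.

Lemma rival_entry_sorted i j : (i <= j)%N -> (j < size rivals)%N ->
  rival_entry i <= rival_entry j.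
Proof.
move=> ij j_lt; have i_lt := leq_ltn_trans ij j_lt; rewrite /rival_entry i_lt j_lt.
have sorted_rivals : sorted (fun a b => entry a <= entry b) rivals.
  by apply: sort_sorted => a b; apply: le_total.
have le_trans_entry : transitive (fun a b => entry a <= entry b).
  by move=> a b z; apply: le_trans.
by apply: (sorted_leq_nth le_trans_entry (fun a => lexx (entry a)) c sorted_rivals);
  rewrite ?inE.
Qed.

Lemma rival_entry_mono n : rival_entry n <= rival_entry n.+1.
Proof.
have [lt|ge] := ltnP n.+1 (size rivals); first exact: rival_entry_sorted.
by rewrite {2}/rival_entry ltnNge ge rival_entry_le1.
Qed.

(* above threshold [t] both ends of [e] lie in [S_c]; a mistake then needs a rival
   placed after [c] whose entry is below [rho], and the earliest such rival in
   entry order is [first_late p] *)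
Lemma late_rival_below rho p : t < rho -> gcr_mistake ends lab x d rho p e ->
  rival_entry (first_late p) < rho.
Proof.
move=> t_rho [w we wrong]; rewrite ltNge; apply/negP => late_high.
move/negP: wrong; apply; apply/eqP; apply: gcr_color_eq.
  exact: le_lt_trans (xe_ge we) t_rho.
move=> j cj; rewrite -leNgt; set i := p j.
have ic : i != c by apply/eqP => ic; move: cj; rewrite -ic /i permK ltnn.
have ri : i \in rivals by rewrite mem_rivals.
have idx_lt : (index i rivals < size rivals)%N by rewrite index_mem.
have first_le : (first_late p <= index i rivals)%N.
  rewrite leqNgt; apply/negP => lt_first; have := before_find c lt_first.
  by rewrite nth_index // /pos /i permK cj.
have := rival_entry_sorted first_le idx_lt; rewrite {2}/rival_entry idx_lt nth_index //.
by move=> /(le_trans late_high) /le_trans; apply; apply: entry_le.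
Qed.

Local Notation T := (Num.max (1/2) t).

(* the mistakes of p lie in ]1/2, T] and ]max T r_J, 7/8[ *)
Lemma mistake_measure p :
  ((@lebesgue_measure R)
     [set rho : R | (1/2 < rho < 7/8)%R /\ gcr_mistake ends lab x d rho p e]%classic
   <= ((T - 1/2) + excess (Num.max T (rival_entry (first_late p))))%:E)%E.
Proof.
apply: lebesgue_two_intervals; first by rewrite le_max lexx.
move=> rho /= [/andP[half_rho rho_78] mistake]; have [rho_T|T_rho] := lerP rho T.
  by left; rewrite /= in_itv /= half_rho rho_T.
right; rewrite /= in_itv /= rho_78 andbT gt_max T_rho /=.
by apply: late_rival_below mistake; apply: le_lt_trans T_rho; rewrite le_max lexx orbT.
Qed.

Definition side (j : nat) : bool := x u (nth c rivals j) <= x v (nth c rivals j).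

(* the constraint sum_i x_w^i = k - 1, read on the colors other than c *)
Lemma sum_complement w : \sum_(i | i != c) (1 - x w i) = x w c.
Proof.
have total : \sum_i (1 - x w i) = 1.
  by rewrite sumrB sumr_const card_ord; case: feas => sum_x _; rewrite sum_x; lra.
by rewrite (bigD1 c) //= in total; lra.
Qed.

(* the rivals whose entry is attained at [u] (resp. [v]) share the budget
   sum_(i != c) (1 - x_u^i) = x_u^c <= t *)
Lemma rival_budget N : color_budget t (fun j => 1 - rival_entry j) side N.
Proof.
move=> b; apply: le_trans (sum_truncate _ (S := size rivals) _ _) _.
- by move=> n; case: ifP => _ //; rewrite subr_ge0 rival_entry_le1.
- by move=> n n_ge; rewrite /rival_entry ltnNge n_ge subrr; case: ifP.
pose g i := if (x u i <= x v i) == b then 1 - entry i else 0.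
have -> : \sum_(0 <= j < size rivals) (if side j == b then 1 - rival_entry j else 0)
    = \sum_(i <- rivals) g i.
  by rewrite (big_nth c); apply: eq_big_nat => j /andP[_ j_lt]; rewrite /g /side /rival_entry j_lt.
rewrite (perm_big _ (permEl (perm_sort _ _))) big_filter.
pose w := if b then u else v.
have we : w \in ends e by rewrite ends_e !inE /w; case: ifP => _; rewrite eqxx ?orbT.
apply: le_trans (xe_ge we); rewrite -sum_complement big_enum_cond /=.
apply: ler_sum => i _; rewrite /g /w /entry; clear g we w; case: b; case: ifP => side_i.
- by move/eqP: side_i => side_i; rewrite min_l.
- by rewrite subr_ge0; case/andP: (x_range u i).
- by move/eqP/negbT: side_i; rewrite -ltNge => side_i; rewrite min_r // ltW.
- by rewrite subr_ge0; case/andP: (x_range v i).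
Qed.

Lemma rival_admissible : admissible t rival_entry.
Proof.
have mono j : 1 - rival_entry j.+1 <= 1 - rival_entry j.
  by rewrite lerD2l lerN2 rival_entry_mono.
have ge0 j : 0 <= 1 - rival_entry j by rewrite subr_ge0 rival_entry_le1.
split.
- exact: rival_entry_mono.
- by have := two_color_majority (n := 0) (m := 1) mono ge0 (rival_budget 1) isT; rewrite mul1r.
- exact: two_color_pair mono ge0 (rival_budget 3).
- exact: two_color_triple mono ge0 (rival_budget 5).
- exact: (two_color_majority (n := 6) (m := 4) mono ge0 (rival_budget 7) isT).
- exact: (two_color_majority (n := 10) (m := 6) mono ge0 (rival_budget 11) isT).
Qed.

(* [first_late p >= n] iff [c] comes after the [n] rivals of smallest entry *)
Lemma card_first_late_ge n : (n <= size rivals)%N ->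
  #|[set p | (n <= first_late p)%N]| * n.+1 = k`!.
Proof.
move=> n_le; have c_out : c \notin take n rivals.
  by apply/negP => /mem_take; rewrite mem_rivals eqxx.
have uniq_s : uniq (c :: take n rivals) by rewrite /= c_out take_uniq ?uniq_rivals.
have -> : [set p | (n <= first_late p)%N] = last_of (c :: take n rivals) c.
  apply/setP => p; rewrite !inE /= (leqnn (pos p c)) /= leqNgt -has_take_leq // -all_predC.
  by apply: eq_all => i /=; rewrite -leqNgt.
by have := card_last_of uniq_s (mem_head _ _); rewrite /= size_takel.
Qed.

Lemma card_first_late_eq n : (n < size rivals)%N ->
  #|[set p | first_late p == n]|%:R = k`!%:R / (n.+1 * n.+2)%:R :> R.
Proof.
move=> n_lt.
have -> : [set p | first_late p == n]
    = [set p | (n <= first_late p)%N] :\: [set p | (n.+1 <= first_late p)%N].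
  by apply/setP => p; rewrite !inE -leqNgt eqn_leq.
have sub : [set p | (n.+1 <= first_late p)%N] \subset [set p | (n <= first_late p)%N].
  by apply/fintype.subsetP => p; rewrite !inE; apply: ltnW.
have card_ge m : (m <= size rivals)%N ->
    #|[set p | (m <= first_late p)%N]|%:R = k`!%:R / m.+1%:R :> R.
  by move=> m_le; rewrite -(card_first_late_ge m_le) natrM mulfK // pnatr_eq0.
rewrite cardsDS // natrB ?subset_leq_card // (card_ge n (ltnW n_lt)) (card_ge n.+1 n_lt).
by rewrite natrM -!natr1; field; rewrite !natr1 !pnatr_eq0.
Qed.

Lemma sum_first_late (F : nat -> R) : F (size rivals) = 0 ->
  \sum_(p : {perm 'I_k}) F (first_late p)
  = k`!%:R * \sum_(0 <= n < size rivals) F n / (n.+1 * n.+2)%:R.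
Proof.
move=> F_end; set S := size rivals.
transitivity (\sum_(0 <= n < S.+1) #|[set p | first_late p == n]|%:R * F n).
  rewrite (eq_bigr (fun p => \sum_(0 <= n < S.+1) ((first_late p == n)%:R * F n))).
    rewrite exchange_big /=; apply: eq_bigr => n _; rewrite -big_distrl /=.
    rewrite -sum1_card natr_sum [in RHS]big_mkcond; congr (_ * _).
    by apply: eq_bigr => p _; rewrite inE; case: (_ == _).
  by move=> p _; rewrite sum_indicator // ltnS find_size.
rewrite big_nat_recr //= F_end mulr0 addr0 big_distrr /=.
by apply: eq_big_nat => n /andP[_ n_lt]; rewrite card_first_late_eq // mulrAC mulrA.
Qed.

Lemma edge_mistake_bound : 0 < t < 3/4 ->
  (gcr_prob_mistake ends lab (1/2) (7/8) x d e <= ((4/3) * t)%:E)%E.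
Proof.
move=> t_range; rewrite /gcr_prob_mistake.
have fact_gt0 : 0 < k`!%:R :> R by rewrite ltr0n fact_gt0.
pose gain n := excess (Num.max T (rival_entry n)).
have gain_end : gain (size rivals) = 0.
  rewrite /gain /rival_entry ltnn /excess; apply/max_idPl.
  by rewrite subr_le0 le_max; apply/orP; right; lra.
have t_le : t <= Num.max T (rival_entry 0) by rewrite !le_max lexx !orbT.
have avg_gain : \sum_(0 <= n < size rivals) gain n / (n.+1 * n.+2)%:R <= t/2 - (T - 1/2)
  := gain_bound (size rivals) t_range (admissible_max T rival_admissible) t_le.
apply: le_trans.
  apply: lee_wpmul2r; first by rewrite lee_fin invr_ge0 mulr_ge0 ?ler0n //; lra.
  apply: le_trans; first by apply: lee_sum => p _; apply: mistake_measure.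
  by rewrite sumEFin.
rewrite -EFinM lee_fin big_split /= sumr_const card_Sn (sum_first_late gain_end).
rewrite -[(T - 1/2) *+ _]mulr_natr ler_pdivrMr; last by rewrite mulr_gt0 //; lra.
have -> : 4/3 * t * (k`!%:R * (7/8 - 1/2)) = k`!%:R * (t / 2) by field.
by rewrite mulrC -mulrDr ler_pM2l //; lra.
Qed.

End EdgeRounding.

Theorem lemma6 (R : realType) :
  (forall q : nat, (1 <= q <= 6)%N -> (A_val R q <= (1 / 2 : R)%:E)%E) /\
  (forall p q : nat, (1 <= p <= 5)%N -> (p <= q <= 10)%N ->
     (B_val R p q <= (1 / 2 : R)%:E)%E) /\
  (forall (V E : finType) (k : nat) (ends : E -> {set V}) (lab : E -> 'I_k),
     edge_colored_graph ends ->
     forall (x : V -> 'I_k -> R) (xe : E -> R),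
     minecc_feasible ends lab x xe ->
     forall e : E,
     (forall w, w \in ends e -> x w (lab e) <= xe e) ->
     (exists2 w, w \in ends e & xe e = x w (lab e)) ->
     1 / 8 < xe e < 3 / 4 ->
     forall d : V -> 'I_k,
     (gcr_prob_mistake ends lab (1 / 2) (7 / 8) x d e
        <= ((4 / 3) * xe e)%:E)%E).
Proof.
split; [|split].
- move=> q q_range; apply: ge_ereal_sup => y [w [chi [feasible ->]]].
  by rewrite lee_fin; apply: A_obj_le.
- move=> p q p_range q_range; apply: ge_ereal_sup => y [w [chi [feasible ->]]].
  by rewrite lee_fin; apply: B_obj_le.
- move=> V E k ends lab two_ends x xe feas e xe_ge _ /andP[t_low t_high] d.
  have /cards2P [u [v [_ ends_e]]] : #|ends e| == 2 by rewrite two_ends.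
  apply: edge_mistake_bound ends_e feas xe_ge _.
  by rewrite t_high andbT; apply: lt_trans t_low.
Qed.
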